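(* Let $H$ be a hypergraph with $R(H)=\{1,2\}$ such that the graph $H^2$ of its $2$-edges is bipartite and $H$ contains no closed path $\bar P_{2k}$ as a subgraph for any $k\ge1$. Then $\pi(H)=1$.
   Context: A hypergraph $H=(V,E)$ has finite vertex set $V$ and edge set $E\subseteq 2^V$; $R(H)=\{|F|:F\in E\}$. $H_1\subseteq H_2$ (subgraph) means there is an injective $f\colon V(H_1)\to V(H_2)$ with $f(F)\in E(H_2)$ for all $F\in E(H_1)$. For $G$ on $n$ vertices, $h_n(G)=\sum_{F\in E(G)}1/\binom{n}{|F|}$; $\pi_n(H)=\max\{h_n(G): G\text{ on } n \text{ vertices}, R(G)\subseteq R(H), H\not\subseteq G\}$ and $\pi(H)=\lim_n\pi_n(H)$. A closed path of length $m$, $\bar P_m$, is the hypergraph with vertices $x_1,\dots,x_m$, $1$-edges $\{x_1\},\{x_m\}$ and $2$-edges $\{x_i,x_{i+1}\}$ for $1\le i\le m-1$. *)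

From HB Require Import structures.
From mathcomp Require Import all_boot all_order all_algebra.
From mathcomp Require Import all_classical all_reals all_analysis.
Set Implicit Arguments. Unset Strict Implicit. Unset Printing Implicit Defensive.
Import Order.TTheory GRing.Theory Num.Theory.
Local Open Scope ring_scope.

Definition hsizes (V : finType) (E : {set {set V}}) (k : nat) : bool :=
  [exists F in E, #|F| == k].

Definition subhyp (V1 V2 : finType) (E1 : {set {set V1}}) (E2 : {set {set V2}}) : bool :=
  [exists f : {ffun V1 -> V2}, injectiveb f && [forall F in E1, (f @: F) \in E2]].

(* Closed path \bar P_m on vertices 'I_m (x_1..x_m = 0..m-1):
   1-edges {x_1},{x_m}; 2-edges {x_i,x_{i+1}}. *)
Definition closed_path (m : nat) : {set {set 'I_m}} :=
  [set F : {set 'I_m} |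
     [exists i : 'I_m, (F == [set i]) && ((val i == 0%N) || (val i == m.-1))]
  || [exists i : 'I_m, exists j : 'I_m, (F == [set i; j]) && (val j == (val i).+1)]].

Definition bipartite2 (V : finType) (E : {set {set V}}) : Prop :=
  exists c : V -> bool, forall x y : V, x != y -> [set x; y] \in E -> c x != c y.

Definition hn (R : realType) (n : nat) (G : {set {set 'I_n}}) : R :=
  \sum_(F in G) ('C(n, #|F|)%:R)^-1.

Definition admissible (V : finType) (H : {set {set V}}) (n : nat)
  (G : {set {set 'I_n}}) : bool :=
  [forall F in G, hsizes H #|F|] && ~~ subhyp H G.

(* pi_n(H) = max of h_n(G) over admissible G (the empty G is admissible
   whenever H has an edge, and h_n >= 0, so folding max from 0 is the max). *)
Definition pin (R : realType) (V : finType) (H : {set {set V}}) (n : nat) : R :=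
  \big[Num.max/0]_(G : {set {set 'I_n}} | admissible H G) hn R G.

(* The singletons on n vertices give pi_n(H) >= 1. Conversely, let G have 1- and
   2-edges only and h_n(G) > 1 + 1/K, let S be the set of its 1-vertices and
   N(y) the set of 1-vertices adjacent to y. Counting the 2-edges inside the
   complement of S, which number at most C(n - |S|, 2), and those meeting S, at
   most sum_y |N(y)|, gives K sum_y |N(y)| > C(n, 2). Hence many vertices have
   degree linear in n, and the Kővári–Sós–Turán double count yields t-sets
   X and Y, t = |V(H)|, with X inside S and X, Y completely joined.
   A path of odd length in H^2 between two 1-vertices of H would close, through
   their 1-edges, to a closed path of even order, so all 1-vertices in one
   component of H^2 have the same colour; recolouring component-wise puts every
   1-vertex of H on one side, which is then mapped into X and the other side
   into Y. *)

From HB Require Import structures.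
From mathcomp Require Import all_boot all_order all_algebra.
From mathcomp Require Import all_classical all_reals all_analysis.
From mathcomp Require Import zify ring lra.
Import Order.TTheory GRing.Theory Num.Theory numFieldNormedType.Exports.
Set Implicit Arguments. Unset Strict Implicit. Unset Printing Implicit Defensive.

Section Recolouring.
Variables (V : finType) (H : {set {set V}}).

Definition edge2 : rel V := fun u v => (u != v) && ([set u; v] \in H).
Definition edge1 (v : V) : bool := [set v] \in H.

Lemma edge2_sym : symmetric edge2.
Proof. by move=> u v; rewrite /edge2 eq_sym finset.setUC. Qed.

Lemma subhyp_closed_path_of_path a p :
  edge1 a -> edge1 (last a p) -> path edge2 a p -> uniq (a :: p) ->
  subhyp (closed_path (size p).+1) H.
Proof.
move=> a1 last1 ap uniq_ap.
apply/existsP; exists [ffun i : 'I_(size p).+1 => nth a (a :: p) i].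
apply/andP; split.
  apply/injectiveP => i j; rewrite !ffunE => /eqP.
  by rewrite nth_uniq // => /eqP/val_inj.
apply/forallP => F; apply/implyP; rewrite inE => /orP[].
  case/existsP => i /andP[/eqP -> /orP[] /eqP i_end]; rewrite imset_set1 ffunE i_end //.
  by rewrite -last_nth.
case/existsP => i /existsP[j /andP[/eqP -> /eqP ij]].
have i_lt : (i < size p)%N by rewrite -ltnS -ij ltn_ord.
by rewrite imsetU1 imset_set1 !ffunE ij; case/andP: (pathP a ap i i_lt).
Qed.

Variable c : V -> bool.
Hypothesis c_proper : forall u v, edge2 u v -> c u != c v.

Lemma colour_last_path x p : path edge2 x p -> c (last x p) = c x (+) odd (size p).
Proof.
elim: p x => [|y p IHp] x /=; first by rewrite addbF.
case/andP=> /c_proper; rewrite -negb_eqb => /negbTE cxy /IHp ->.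
by move: cxy; case: (c x); case: (c y) => //= _; rewrite ?negbK.
Qed.

Hypothesis no_even_closed_path :
  forall k, (0 < k)%N -> ~~ subhyp (closed_path (2 * k)) H.

Lemma edge1_connect_colour a b :
  edge1 a -> edge1 b -> connect edge2 a b -> c a = c b.
Proof.
move=> a1 b1 /connectP[p ap b_last]; subst b; move: b1.
case: (shortenP ap) => q aq uniq_aq _ {ap p} last1.
rewrite (colour_last_path aq); case odd_q: (odd (size q)); last by rewrite addbF.
have size_q : (size q).+1 = (2 * (size q)./2.+1)%N.
  by have := odd_double_half (size q); rewrite odd_q -mul2n; lia.
case/negP: (no_even_closed_path (ltn0Sn (size q)./2)).
rewrite -size_q; exact: subhyp_closed_path_of_path a1 last1 aq uniq_aq.
Qed.

(* Within each component of H^2 that contains a 1-vertex a, flip the colouring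
   so that a gets colour true; by edge1_connect_colour every 1-vertex does. *)
Definition recolour (v : V) : bool :=
  if [pick a | edge1 a && connect edge2 a v] is Some a then c v == c a else c v.

Lemma recolour_edge1 v : edge1 v -> recolour v.
Proof.
move=> v1; rewrite /recolour; case: pickP => [a /andP[a1 av] | /(_ v)].
  by rewrite (edge1_connect_colour a1 v1 av).
by rewrite v1 connect0.
Qed.

Lemma recolour_proper u v : edge2 u v -> recolour u != recolour v.
Proof.
move=> uv; have cuv := c_proper uv.
have same_comp a : connect edge2 a u = connect edge2 a v.
  apply: same_connect_r; first exact/sym_connect_sym/edge2_sym.
  exact: connect1.
rewrite /recolour (eq_pick (fun a => congr1 (andb (edge1 a)) (same_comp a))).
case: pickP => // a _; move: cuv.
by case: (c u); case: (c v); case: (c a).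
Qed.

End Recolouring.

Lemma exists_injection_into (T W : finType) (X : {set W}) :
  (#|T| <= #|X|)%N -> exists2 f : T -> W, injective f & forall x, f x \in X.
Proof.
move=> TX; exists (fun x => @enum_val _ (mem X) (widen_ord TX (enum_rank x))).
  by move=> x y /enum_val_inj/(congr1 val) /= e; apply/enum_rank_inj/val_inj.
by move=> x; apply: enum_valP.
Qed.

Definition sizes12 (V : finType) (E : {set {set V}}) : Prop :=
  forall F, F \in E -> #|F| = 1 \/ #|F| = 2.

Lemma subhyp_complete_bipartite (V W : finType) (H : {set {set V}})
    (G : {set {set W}}) (X Y : {set W}) (c : V -> bool) :
  sizes12 H -> (forall v, edge1 H v -> c v) -> (forall u v, edge2 H u v -> c u != c v) ->
  (#|V| <= #|X|)%N -> (#|V| <= #|Y|)%N ->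
  (forall x, x \in X -> edge1 G x) -> (forall x y, x \in X -> y \in Y -> edge2 G x y) ->
  subhyp H G.
Proof.
move=> H12 c1 c2 VX VY X1 XY2.
have [fX fX_inj fXP] := exists_injection_into VX.
have [fY fY_inj fYP] := exists_injection_into VY.
have XY_neq u v : fX u != fY v by case/andP: (XY2 _ _ (fXP u) (fYP v)).
pose f v := if c v then fX v else fY v.
apply/existsP; exists [ffun v => f v]; apply/andP; split.
  apply/injectiveP => u v; rewrite !ffunE /f.
  case: (c u); case: (c v) => fuv; first exact: fX_inj; last exact: fY_inj.
    by move: (XY_neq u v); rewrite fuv eqxx.
  by move: (XY_neq v u); rewrite fuv eqxx.
apply/forallP => F; apply/implyP => HF.
case: (H12 F HF) => /eqP.
  case/cards1P => v F_v; rewrite F_v in HF *.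
  by rewrite imset_set1 ffunE /f c1 //; apply/X1/fXP.
case/cards2P => u [v [uv F_uv]]; rewrite F_uv in HF *.
have uv2 : edge2 H u v by rewrite /edge2 uv.
have := c2 u v uv2; rewrite imsetU1 imset_set1 !ffunE /f.
case: (c u); case: (c v) => //= _; first by case/andP: (XY2 _ _ (fXP u) (fYP v)).
by rewrite finset.setUC; case/andP: (XY2 _ _ (fXP v) (fYP u)).
Qed.

Section Counting.
Local Open Scope nat_scope.

Lemma sum_bin_card_subsets (I T : finType) (N : I -> {set T}) t :
  \sum_i 'C(#|N i|, t) =
  \sum_(X : {set T} | #|X| == t) #|[set i | X \subset N i]|.
Proof.
under eq_bigr => i _ do rewrite -cards_draws -sum1_card big_mkcond /=.
rewrite exchange_big [RHS]big_mkcond /=; apply: eq_bigr => X _.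
case: (#|X| =P t) => [<-|neq_t].
  by rewrite -[RHS]sum1_card [RHS]big_mkcond; apply: eq_bigr => i _; rewrite !inE eqxx andbT.
by rewrite big1 // => i _; rewrite inE (introF eqP neq_t) andbF.
Qed.

(* The pigeonhole step of the Kővári–Sós–Turán bound. *)
Lemma exists_common_subset (I T : finType) (N : I -> {set T}) t :
  (t - 1) * 'C(#|T|, t) < \sum_i 'C(#|N i|, t) ->
  exists2 X : {set T}, #|X| = t & t <= #|[set i | X \subset N i]|.
Proof.
rewrite sum_bin_card_subsets => lt_sum.
have [X /andP[/eqP X_t X_many]|few] :=
  pickP (fun X : {set T} => (#|X| == t) && (t <= #|[set i | X \subset N i]|)).
  by exists X.
suff : \sum_(X : {set T} | #|X| == t) #|[set i | X \subset N i]| <= (t - 1) * 'C(#|T|, t).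
  by rewrite leqNgt lt_sum.
apply: (@leq_trans (\sum_(X : {set T} | #|X| == t) (t - 1))).
  apply: leq_sum => X X_t.
  by move: (few X); rewrite X_t /= => /negbT; rewrite -ltnNge; lia.
by rewrite -card_draws mulnC -sum_nat_const; apply/eq_leq/eq_bigl => X; rewrite finset.inE.
Qed.
End Counting.

Section BinomialEstimates.
Local Open Scope nat_scope.

Lemma leq_exp_sub_ffact m t : (m - t) ^ t <= m ^_ t.
Proof.
rewrite ffact_prod -[in X in _ ^ X](card_ord t) -prod_nat_const.
by apply: leq_prod => i _; apply/leq_sub2l/ltnW.
Qed.

Lemma leq_ffact_exp n t : n ^_ t <= n ^ t.
Proof.
rewrite ffact_prod -[in X in _ ^ X](card_ord t) -prod_nat_const.
by apply: leq_prod => i _; apply: leq_subr.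
Qed.

Lemma leq_bin_scaled n m t L : n <= L * (m - t) -> 'C(n, t) <= L ^ t * 'C(m, t).
Proof.
move=> n_le; rewrite -(leq_pmul2r (fact_gt0 t)) -mulnA !bin_ffact.
apply: leq_trans (leq_ffact_exp n t) (@leq_trans ((L * (m - t)) ^ t) _ _ _ _).
  by case: t n_le => [|t] n_le; rewrite ?expn0 // leq_exp2r.
by rewrite expnMn leq_mul2l leq_exp_sub_ffact orbT.
Qed.

Lemma bin2_mul2 k : 'C(k, 2) * 2 = k * (k - 1).
Proof. by rewrite (bin_ffact k 2) ffactnSr ffactn1. Qed.

Lemma bin2_sub_mul_le n s : 'C(n - s, 2) * n <= (n - s) * 'C(n, 2).
Proof.
rewrite -(leq_pmul2r (ltn0Sn 1)) mulnAC bin2_mul2 -[leqRHS]mulnA bin2_mul2.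
by rewrite -mulnA leq_mul2l mulnC leq_mul2l leq_sub2r ?leq_subr ?orbT.
Qed.

Definition large_degrees (I : finType) (d : I -> nat) (n L : nat) : {set I} :=
  [set i | n <= L * d i].

Lemma many_large_degrees (I : finType) (d : I -> nat) (n L : nat) :
  #|I| <= n -> (forall i, d i <= n) -> 2 * n * (n - 1) < L * \sum_i d i ->
  n < L * #|large_degrees d n L| + 2.
Proof.
move=> I_n d_n lt_sum; set B := large_degrees d n L.
have sum_B : L * \sum_(i in B) d i <= L * (#|B| * n).
  by rewrite leq_mul2l -sum_nat_const leq_sum ?orbT.
have sum_nB : L * \sum_(i | i \notin B) d i <= n * n.
  rewrite big_distrr /= (@leq_trans (\sum_(i | i \notin B) n)) //.
    by apply: leq_sum => i; rewrite !inE -ltnNge => /ltnW.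
  rewrite (eq_bigl (mem (~: B))) => [|i]; last by rewrite !inE.
  by rewrite sum_nat_const leq_mul2r (leq_trans (max_card _)) ?orbT.
move: lt_sum; rewrite (bigID (mem B)) /= mulnDr; nia.
Qed.

(* The first summand forces m := n %/ L >= 2 t + 2, the second makes the
   more than (n - 2) / L vertices of large degree outnumber (t - 1) (2 L)^t. *)
Definition degree_threshold (L t : nat) : nat :=
  2 * L * (t + 1) + L * (t - 1) * (2 * L) ^ t + 3.

(* Each vertex of large degree contributes at least 'C(m, t), and
   'C(n, t) <= (2 L)^t 'C(m, t). *)
Lemma sum_bin_large_degrees (I : finType) (d : I -> nat) (n L t : nat) :
  0 < L -> degree_threshold L t <= n -> n < L * #|large_degrees d n L| + 2 ->
  (t - 1) * 'C(n, t) < \sum_i 'C(d i, t).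
Proof.
move=> L_gt0 n_ge n_lt; set B := large_degrees d n L; set m := n %/ L.
have n_lt_m : n < m.+1 * L by apply: ltn_ceil.
have m_le_d i : i \in B -> m <= d i.
  rewrite inE => n_le; rewrite -(leq_pmul2l L_gt0) mulnC.
  exact: leq_trans (leq_divM n L) n_le.
have sum_B : #|B| * 'C(m, t) <= \sum_i 'C(d i, t).
  rewrite -sum_nat_const [leqRHS](bigID (mem B)) /=.
  apply: leq_trans (leq_addr _ _); apply: leq_sum => i /m_le_d; apply: leq_bin2l.
have m_ge : 2 * t + 2 <= m.
  rewrite -ltnS -(ltn_pmul2r L_gt0); apply: leq_ltn_trans n_lt_m.
  by move: n_ge; rewrite /degree_threshold; move: (L * _ * _) => P; nia.
have C_n : 'C(n, t) <= (2 * L) ^ t * 'C(m, t).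
  apply/leq_bin_scaled/ltnW/(leq_trans n_lt_m).
  by rewrite mulnAC leq_mul2r; apply/orP; right; lia.
have C_m : 0 < 'C(m, t) by rewrite bin_gt0; lia.
have B_large : (t - 1) * (2 * L) ^ t < #|B|.
  rewrite -(ltn_pmul2l L_gt0) mulnA; move: n_ge n_lt; rewrite /degree_threshold -/B.
  by move: (L * _ * _) (L * #|B|) => Q LB; lia.
apply: leq_ltn_trans (leq_mul (leqnn _) C_n) (leq_trans _ sum_B).
by rewrite mulnA ltn_pmul2r.
Qed.

End BinomialEstimates.

Section EdgeCounting.
Local Open Scope nat_scope.
Variables (W : finType) (G : {set {set W}}).

Definition vertices1 : {set W} := [set x | edge1 G x].
Definition nbhd1 (y : W) : {set W} := [set x | edge1 G x && edge2 G x y].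

Lemma card_edges1_le : #|[set F in G | #|F| == 1]| <= #|vertices1|.
Proof.
apply: leq_trans (leq_imset_card (fun x => [set x]) _).
apply/subset_leq_card/fintype.subsetP => F; rewrite inE => /andP[GF /cards1P[x F_x]].
by apply/imsetP; exists x; rewrite // inE /edge1 -F_x.
Qed.

Lemma card_pairs_nbhd1 :
  #|[set p : W * W | p.2 \in nbhd1 p.1]| = \sum_y #|nbhd1 y|.
Proof.
rewrite -sum1dep_card; under [RHS]eq_bigr do rewrite -sum1_card.
by rewrite pair_big_dep.
Qed.

(* A 2-edge either consists of two vertices outside vertices1, or is {x, y}
   with x \in nbhd1 y. *)
Lemma card_edges2_le :
  #|[set F in G | #|F| == 2]| <= 'C(#|W| - #|vertices1|, 2) + \sum_y #|nbhd1 y|.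
Proof.
pose inside := [set F : {set W} | F \subset ~: vertices1 & #|F| == 2].
pose meeting := [set [set p.2; p.1] | p in [set p : W * W | p.2 \in nbhd1 p.1]].
have card_inside : #|inside| = 'C(#|W| - #|vertices1|, 2).
  by rewrite cards_draws cardsCs finset.setCK.
rewrite -card_inside -card_pairs_nbhd1.
apply: leq_trans (leq_add (leqnn _) (leq_imset_card _ _)).
apply: leq_trans (leq_card_setU inside meeting).
apply/subset_leq_card/fintype.subsetP => F; rewrite inE => /andP[GF F2]; rewrite finset.in_setU.
have [F_out|/fintype.subsetPn[x xF]] := boolP (F \subset ~: vertices1).
  by rewrite inE F_out F2.
rewrite inE negbK => x1; apply/orP; right.
case/cards2P: F2 GF xF => u [v [uv ->]] GF xF.
have [y [xy F_xy]] : exists y, x != y /\ [set u; v] = [set x; y].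
  by case/finset.set2P: xF => ->; [exists v | exists u; rewrite eq_sym finset.setUC].
rewrite inE in x1; apply/imsetP; exists (y, x) => //.
by rewrite !inE /= x1 /edge2 xy -F_xy GF.
Qed.

End EdgeCounting.

Local Open Scope ring_scope.

Section Density.
Variables (R : realType) (n : nat) (G : {set {set 'I_n}}).
Hypothesis G_sizes : sizes12 G.

Lemma hn_sizes12 :
  hn R G = #|[set F in G | #|F| == 1%N]|%:R / n%:R
         + #|[set F in G | #|F| == 2%N]|%:R / ('C(n, 2))%:R.
Proof.
rewrite /hn (bigID (fun F : {set _} => #|F| == 1%N)) /=.
have card_sum k : \sum_(F in G | #|F| == k) ('C(n, #|F|)%:R)^-1 =
    #|[set F in G | #|F| == k]|%:R / ('C(n, k))%:R :> R.
  rewrite (eq_bigr (fun=> ('C(n, k)%:R)^-1)) => [|F /andP[_ /eqP ->] //].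
  rewrite (eq_bigl [in [set F in G | #|F| == k]]) => [|F]; last by rewrite !inE.
  by rewrite sumr_const mulr_natl.
rewrite card_sum bin1 -card_sum; congr (_ + _); apply: eq_bigl => F.
by case GF: (F \in G) => //=; case: (G_sizes GF) => ->.
Qed.

Lemma hn_le_degrees : (1 < n)%N ->
  hn R G <= 1 + (\sum_y #|nbhd1 G y|)%:R / ('C(n, 2))%:R.
Proof.
move=> n_gt1; rewrite hn_sizes12.
set s1 := #|_|; set s2 := #|_|; set s := #|vertices1 G|.
set D := \sum_y _; set Cs := 'C(n - s, 2).
have n_pos : 0 < n%:R :> R by rewrite ltr0n ltnW.
have C_pos : 0 < 'C(n, 2)%:R :> R by rewrite ltr0n bin_gt0.
have s_le : (s <= n)%N by rewrite -[leqRHS](card_ord n) max_card.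
have s1_le : s1%:R / n%:R <= s%:R / n%:R :> R.
  by rewrite ler_pM2r ?invr_gt0 // ler_nat card_edges1_le.
have s2_le : s2%:R / 'C(n, 2)%:R <= Cs%:R / 'C(n, 2)%:R + D%:R / 'C(n, 2)%:R :> R.
  rewrite -mulrDl ler_pM2r ?invr_gt0 // -natrD ler_nat.
  by have := card_edges2_le G; rewrite card_ord.
have Cs_le : Cs%:R / 'C(n, 2)%:R <= (n - s)%:R / n%:R :> R.
  by rewrite ler_pdivrMr // mulrAC ler_pdivlMr // -!natrM ler_nat bin2_sub_mul_le.
have split_one : s%:R / n%:R + (n - s)%:R / n%:R = 1 :> R.
  by rewrite -mulrDl -natrD subnKC // divff // gt_eqF.
lra.
Qed.

Lemma lt_bin2_degrees_of_hn (K : nat) : (1 < n)%N -> (0 < K)%N ->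
  1 + (K%:R)^-1 < hn R G -> ('C(n, 2) < K * \sum_y #|nbhd1 G y|)%N.
Proof.
move=> n_gt1 K_gt0 lt_hn; have := lt_le_trans lt_hn (hn_le_degrees n_gt1).
rewrite ltrD2l ltr_pdivlMr ?ltr0n ?bin_gt0 // mulrC ltr_pdivrMr ?ltr0n //.
by rewrite -natrM ltr_nat mulnC.
Qed.

Lemma subhyp_of_hn_gt (V : finType) (H : {set {set V}}) (c : V -> bool) (K : nat) :
  sizes12 H -> (forall v, edge1 H v -> c v) -> (forall u v, edge2 H u v -> c u != c v) ->
  (0 < K)%N -> (0 < #|V|)%N -> (degree_threshold (4 * K) #|V| <= n)%N ->
  1 + (K%:R)^-1 < hn R G -> subhyp H G.
Proof.
move=> H_sizes c1 c2 K_gt0 V_gt0 n_ge lt_hn.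
have n_gt1 : (1 < n)%N := leq_trans (leq_trans (leqnSn 2) (leq_addl _ 3)) n_ge.
have lt_C := lt_bin2_degrees_of_hn n_gt1 K_gt0 lt_hn.
have large : (n < 4 * K * #|large_degrees (fun y => #|nbhd1 G y|) n (4 * K)| + 2)%N.
  apply: many_large_degrees => [|y|]; rewrite ?card_ord //.
    by rewrite -[leqRHS](card_ord n) max_card.
  by move: lt_C (bin2_mul2 n); move: ('C(n, 2)) (\sum_y _) => C D; nia.
have K4_gt0 : (0 < 4 * K)%N by rewrite muln_gt0.
have := sum_bin_large_degrees K4_gt0 n_ge large.
rewrite -[n in 'C(n, _)](card_ord n) => /exists_common_subset[X X_t Y_t].
set Y := [set y | X \subset nbhd1 G y] in Y_t.
have X_nbhd x y : x \in X -> y \in Y -> x \in nbhd1 G y.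
  by move=> Xx; rewrite inE => /fintype.subsetP; apply.
have [y Yy] : exists y, y \in Y.
  by apply/set0Pn; rewrite -card_gt0 (leq_trans V_gt0).
apply: (subhyp_complete_bipartite (X := X) (Y := Y) H_sizes c1 c2) => [|//|x Xx|x z Xx Yz].
- by rewrite X_t.
- by have := X_nbhd x y Xx Yy; rewrite inE => /andP[].
- by have := X_nbhd x z Xx Yz; rewrite inE => /andP[].
Qed.

End Density.

Section PiBounds.
Variables (R : realType) (V : finType) (H : {set {set V}}).

Lemma pin_ge1 n : hsizes H 1 -> hsizes H 2 -> (0 < n)%N -> 1 <= pin R H n.
Proof.
move=> H1 /existsP[F2 /andP[HF2 /eqP F2_2]] n_gt0.
pose G1 := [set [set x] | x : 'I_n].
have G1_1 F : F \in G1 -> #|F| = 1%N by case/imsetP => x _ ->; rewrite cards1.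
have G1_adm : admissible H G1.
  apply/andP; split; first by apply/forallP => F; apply/implyP => /G1_1 ->.
  apply/negP => /existsP[f /andP[/injectiveP f_inj /forallP f_edges]].
  by have := G1_1 _ (implyP (f_edges F2) HF2); rewrite card_imset // F2_2.
apply: le_trans (le_bigmax_cond _ _ G1_adm).
rewrite /hn (eq_bigr (fun=> (n%:R)^-1)) => [|F /G1_1 ->]; last by rewrite bin1.
rewrite sumr_const card_imset ?card_ord; last exact: set1_inj.
by rewrite -[_ *+ n]mulr_natr mulVf // pnatr_eq0 -lt0n.
Qed.

Lemma pin_le (c : V -> bool) (K n : nat) :
  (forall k, hsizes H k -> k = 1%N \/ k = 2%N) ->
  (forall v, edge1 H v -> c v) -> (forall u v, edge2 H u v -> c u != c v) ->
  (0 < K)%N -> (0 < #|V|)%N -> (degree_threshold (4 * K) #|V| <= n)%N ->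
  pin R H n <= 1 + (K%:R)^-1.
Proof.
move=> sizesH c1 c2 K_gt0 V_gt0 n_ge.
have sizes12_of (W : finType) (E : {set {set W}}) :
    (forall F, F \in E -> hsizes H #|F|) -> sizes12 E.
  by move=> E_sizes F /E_sizes /sizesH.
apply: bigmax_le => [|G /andP[/forallP G_sizes G_free]].
  by rewrite addr_ge0 // invr_ge0 ler0n.
rewrite leNgt; apply: contraNN G_free.
apply: subhyp_of_hn_gt c1 c2 K_gt0 V_gt0 n_ge.
- by apply: sizes12_of => F; apply/implyP.
- by apply: sizes12_of => F HF; apply/existsP; exists F; rewrite HF eqxx.
Qed.

End PiBounds.

Unset Implicit Arguments.
Local Open Scope classical_set_scope.

Theorem mainTheorem10 (R : realType) (V : finType) (H : {set {set V}}) :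
  (forall k : nat, hsizes H k = (k == 1)%N || (k == 2)%N) ->
  bipartite2 H ->
  (forall k : nat, (0 < k)%N -> ~~ subhyp (closed_path (2 * k)) H) ->
  (fun n : nat => pin R H n) @ \oo --> (1 : R).
Proof.
move=> sizesH [c c_proper] no_even_path.
have c2 u v : edge2 H u v -> c u != c v by case/andP; apply: c_proper.
have V_gt0 : (0 < #|V|)%N.
  have /existsP[F /andP[_ /eqP F_2]] : hsizes H 2 by rewrite sizesH.
  by apply: leq_trans (max_card F); rewrite F_2.
have sizes12H k : hsizes H k -> k = 1%N \/ k = 2%N by rewrite sizesH => /orP[] /eqP; auto.
have rc1 := recolour_edge1 c2 no_even_path.
have rc2 := recolour_proper c2.
apply/cvgrPdist_le => eps eps_gt0.
pose K := (Num.truncn eps^-1).+1.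
have K_eps : (K%:R)^-1 < eps.
  by rewrite invf_plt ?posrE ?ltr0n // truncnS_gt.
near=> n.
have n_ge : (maxn 1 (degree_threshold (4 * K) #|V|) <= n)%N by near: n; exact: nbhs_infty_ge.
rewrite geq_max in n_ge; case/andP: n_ge => n_gt0 n_ge.
have := pin_ge1 R (n := n) (sizesH 1) (sizesH 2) n_gt0.
have := pin_le R sizes12H rc1 rc2 (ltn0Sn _ : (0 < K)%N) V_gt0 n_ge.
by rewrite ler_norml => ub lb; apply/andP; split; lra.
Unshelve. all: by end_near.
Qed.
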